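(* Let $n,k\ge 1$, let $f\in\mathcal{B}_c$, and let $X=(X_1,\dots,X_n)$ be a random vector in $\mathbb{R}^n$ (the $X_i$ possibly dependent) such that $P(|X_i|\ge u)\le f(u)$ for all $u\ge 0$ and all $i$. Let $g(x)=\sum_{i=1}^m a_i\,\mu_i(x)+C$, where $C\in\mathbb{R}$ and $\sum_i a_i\mu_i$ is a (nonzero) homogeneous polynomial of degree $k$ in $x_1,\dots,x_n$ written with distinct monomials $\mu_i$ and coefficients $a_i$. Then for all $t\ge C$, $$P(g(X)\ge t)\le n\, f\!\left(\frac{(t-C)^{1/k}}{\left(\sum_i |a_i|\right)^{1/k}}\right).$$
   Context: $\mathcal{B}_c$ is the set of functions $f:[0,\infty)\to(0,\infty)$ that are continuous, strictly decreasing, satisfy $f(0)\ge 1$ and $\lim_{u\to\infty}f(u)=0$. *)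

From HB Require Import structures.
From mathcomp Require Import all_boot all_order all_algebra.
From mathcomp Require Import all_classical all_reals all_analysis.
Set Implicit Arguments. Unset Strict Implicit. Unset Printing Implicit Defensive.
Import Order.TTheory GRing.Theory Num.Theory.
Import numFieldNormedType.Exports.
Local Open Scope classical_set_scope.
Local Open Scope ring_scope.

(* The class B_c: f : [0,oo) -> (0,oo) continuous, strictly decreasing,
   f 0 >= 1, f u -> 0 as u -> +oo.  (f is given as a function on R; only
   its restriction to [0,oo) matters.) *)
Definition Bc (R : realType) (f : R -> R) : Prop :=
  [/\ {within [set u : R | 0 <= u], continuous f},
      (forall u v : R, 0 <= u -> u < v -> f v < f u),
      (forall u : R, 0 <= u -> 0 < f u),
      1 <= f 0 &
      f u @[u --> +oo] --> 0].

Definition monomial (R : realType) (n : nat) (e : {ffun 'I_n -> nat})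
  (x : 'I_n -> R) : R := \prod_(j < n) x j ^+ e j.

Definition polyg (R : realType) (n m : nat) (a : 'I_m -> R)
  (e : 'I_m -> {ffun 'I_n -> nat}) (C : R) (x : 'I_n -> R) : R :=
  \sum_(i < m) a i * monomial (e i) x + C.

From HB Require Import structures.
From mathcomp Require Import all_boot all_order all_algebra.
From mathcomp Require Import all_classical all_reals all_analysis.
Set Implicit Arguments.
Unset Strict Implicit.
Unset Printing Implicit Defensive.

Import Order.TTheory GRing.Theory Num.Theory.
Import numFieldNormedType.Exports.
Local Open Scope classical_set_scope.
Local Open Scope ring_scope.

(* If t <= g(x) with C <= t, then some |x_j| is at least u := ((t - C) / S)^(1/k),
   where S = sum_i |a_i|: otherwise every monomial of degree k is bounded by
   u^k in absolute value and g(x) - C < S u^k = t - C.  Hence the event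
   {g(X) >= t} is covered by the n events {|X_j| >= u}, and the union bound
   together with the tail hypothesis gives n f(u). *)

Lemma powR_invnK (R : realType) (k : nat) (y : R) : (0 < k)%N -> 0 <= y ->
  (y `^ k%:R^-1) ^+ k = y.
Proof.
move=> k_gt0 y_ge0.
rewrite -powR_mulrn ?powR_ge0// -powRrM mulVf ?powRr1//.
by rewrite pnatr_eq0 -lt0n.
Qed.

Lemma normr_monomial_le (R : realType) (n : nat) (e : {ffun 'I_n -> nat})
    (x : 'I_n -> R) (s : R) :
  (forall j, `|x j| <= s) -> `|monomial e x| <= s ^+ (\sum_(j < n) e j).
Proof.
move=> xs; rewrite /monomial normr_prod -prodrXr.
apply: ler_prod => j _; rewrite normr_ge0 normrX /=.
by apply: lerXn2r; rewrite ?nnegrE// (le_trans _ (xs j)).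
Qed.

Section homogeneous_polynomial.
Variables (R : realType) (n m k : nat) (a : 'I_m -> R).
Variables (e : 'I_m -> {ffun 'I_n -> nat}) (C : R).
Hypothesis homogeneous_e : forall i, (\sum_(j < n) e i j)%N = k.

Lemma polyg_subC_le (x : 'I_n -> R) (s : R) : (forall j, `|x j| <= s) ->
  polyg a e C x - C <= (\sum_(i < m) `|a i|) * s ^+ k.
Proof.
move=> xs; rewrite /polyg addrK mulr_suml; apply: ler_sum => i _.
apply: le_trans (ler_norm _) _; rewrite normrM ler_wpM2l//.
by rewrite -(homogeneous_e i); exact: normr_monomial_le.
Qed.

Hypotheses (n_gt0 : (0 < n)%N) (k_gt0 : (0 < k)%N).
Hypothesis suma_gt0 : 0 < \sum_(i < m) `|a i|.

Lemma polyg_subC_lt (x : 'I_n -> R) (u : R) : (forall j, `|x j| < u) ->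
  polyg a e C x - C < (\sum_(i < m) `|a i|) * u ^+ k.
Proof.
move=> xu; pose j0 := Ordinal n_gt0.
pose s := \big[Order.max/0]_(j < n) `|x j|.
have xs j : `|x j| <= s by apply: le_bigmax.
have s_ge0 : 0 <= s by apply: le_trans (xs j0).
have s_lt_u : s < u.
  by apply: bigmax_lt => [|j _]; [apply: le_lt_trans (xu j0) | exact: xu].
apply: le_lt_trans (polyg_subC_le xs) _.
by rewrite ltr_pM2l// ltrXn2r// -lt0n.
Qed.

Lemma polyg_ge_exists_normr_ge (x : 'I_n -> R) (t : R) :
  C <= t -> t <= polyg a e C x ->
  exists j, (t - C) `^ k%:R^-1 / (\sum_(i < m) `|a i|) `^ k%:R^-1 <= `|x j|.
Proof.
move=> tC t_le_g; set u := _ / _.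
have Suk : (\sum_(i < m) `|a i|) * u ^+ k = t - C.
  rewrite /u exprMn exprVn !powR_invnK ?subr_ge0 ?(ltW suma_gt0)//.
  by rewrite mulrC divfK ?gt_eqF.
apply/not_existsP => xu.
have x_lt_u j : `|x j| < u by rewrite ltNge; apply/negP/xu.
by have := polyg_subC_lt x_lt_u; rewrite Suk ltrBlDr subrK ltNge t_le_g.
Qed.

End homogeneous_polynomial.

Lemma measurable_polyg d (T : measurableType d) (R : realType) (n m : nat)
    (a : 'I_m -> R) (e : 'I_m -> {ffun 'I_n -> nat}) (C : R)
    (X : 'I_n -> T -> R) :
  (forall j, measurable_fun setT (X j)) ->
  measurable_fun setT (fun w => polyg a e C (fun j => X j w)).
Proof.
move=> mX; rewrite /polyg /monomial.
apply: measurable_realfun.measurable_funD; last exact: measurable_cst.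
apply: measurable_sum => i.
apply: measurable_realfun.measurable_funM; first exact: measurable_cst.
by apply: measurable_prod => j _; exact: measurable_realfun.measurable_funX.
Qed.

Lemma content_le_cover_mulr d (T : semiRingOfSetsType d) (R : realFieldType)
    (mu : {content set T -> \bar R}) (n : nat) (A : set T) (F : 'I_n -> set T)
    (b : R) :
  measurable A -> (forall i, measurable (F i)) ->
  (forall x, A x -> exists i, F i x) -> (forall i, (mu (F i) <= b%:E)%E) ->
  (mu A <= (n%:R * b)%:E)%E.
Proof.
move=> mA mF AF muFb; pose G (k : nat) := oapp F set0 (insub k).
have GF (i : 'I_n) : G i = F i by rewrite /G valK.
have mG k : measurable (G k) by rewrite /G; case: insub => [i|] /=.
have AG : A `<=` \big[setU/set0]_(k < n) G k.
  by rewrite -bigcup_mkord => x /AF [i Fix]; exists i => //=; rewrite GF.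
apply: (le_trans (content_subadditive mu (fun k _ => mG k) mA AG)).
under eq_bigr => i _ do rewrite GF.
apply: le_trans; first by apply: lee_sum => i _; exact: muFb.
by rewrite sumEFin big_const_ord iter_addr addr0 mulr_natl.
Qed.

Theorem corollary3 (d : measure_display) (T : measurableType d) (R : realType)
  (P : probability T R) (n k : nat) (f : R -> R)
  (X : 'I_n -> T -> R) (m : nat) (a : 'I_m -> R)
  (e : 'I_m -> {ffun 'I_n -> nat}) (C : R) :
  (0 < n)%N -> (0 < k)%N -> Bc f ->
  (forall i, measurable_fun setT (X i)) ->
  (forall i (u : R), 0 <= u -> (P [set w | (u <= `|X i w|)%R] <= (f u)%:E)%E) ->
  injective e ->
  (forall i, (\sum_(j < n) e i j)%N = k) ->
  (exists i, a i != 0) ->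
  forall t : R, C <= t ->
  (P [set w | (t <= polyg a e C (fun j => X j w))%R]
    <= (n%:R * f ((t - C) `^ (k%:R^-1) / (\sum_(i < m) `|a i|) `^ (k%:R^-1)))%:E)%E.
Proof.
move=> n_gt0 k_gt0 _ mX tailX _ homogeneous_e [i0 ai0] t tC.
have suma_gt0 : 0 < \sum_(i < m) `|a i|.
  rewrite (bigD1 i0)//= ltr_pwDl ?normr_gt0//.
  by apply: sumr_ge0 => i _.
set u := _ / _.
have u_ge0 : 0 <= u by rewrite divr_ge0// powR_ge0.
have measurable_superlevel (h : T -> R) c :
    measurable_fun setT h -> measurable [set w | c <= h w].
  by move=> mh; rewrite -[X in measurable X]setTI; apply: measurable_fun_le.
apply: (content_le_cover_mulr (F := fun j => [set w | u <= `|X j w|])).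
- by apply: measurable_superlevel; apply: measurable_polyg.
- by move=> j; apply/measurable_superlevel; apply: measurableT_comp.
- by move=> w; apply: polyg_ge_exists_normr_ge.
- by move=> j; apply: tailX.
Qed.
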